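(* Let $T^\ast$ be the $n\times3$ minimal matrix representation of an acute $0/1$-triangle $\mathcal{T}^\ast$ in $[0,1]^n$ (so $\mathcal{T}^\ast$ is the minimal representative of its $\mathcal{B}_n$-orbit), and let $\mathcal{A}^n(\mathcal{T}^\ast)=\{t_1,\dots,t_p\}$. Then every minimal matrix representation of an acute $0/1$-tetrahedron having $\mathcal{T}^\ast$ as its minimal triangular facet (i.e. whose three leftmost columns form $T^\ast$) is among the matrices $[T^\ast\,|\,t_1],\dots,[T^\ast\,|\,t_p]$.
   Context: $\mathcal{B}_n$ is the group of symmetries of $[0,1]^n$, acting on $\{0,1\}^n$ by permuting coordinates and complementing a subset of coordinates. Column number of $x\in\{0,1\}^n$: $v_n^\top x$ with $v_n^\top=(2^0,\dots,2^{n-1})$. For an $n\times k$ $0/1$-matrix $P$ with distinct columns, $\nu(P)$ is the increasingly sorted vector of its column numbers. $P$ is a minimal matrix representation if its column numbers are strictly increasing left to right and $\nu(P)\preceq\nu(Q)$ lexicographically for every $Q$ obtained from $P$ by complementing some rows and then permuting rows. A set of points of $\{0,1\}^n$ is the vertex set of an acute $0/1$-simplex if it is affinely independent and all dihedral angles of its convex hull are acute (for a triangle: all angles $<\pi/2$); equivalently, with one vertex $a_0$ and $P=[a_1-a_0,\dots]$, $G=P^\top P$, $G^{-1}$ has negative off-diagonal entries and positive row sums. $\mathcal{A}^n(S)$ is the set of $v\in\{0,1\}^n$ such that $S\cup\{v\}$ is the vertex set of an acute $0/1$-simplex with one more vertex. *)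

From HB Require Import structures.
From mathcomp Require Import all_boot all_order all_fingroup all_algebra.
Set Implicit Arguments. Unset Strict Implicit. Unset Printing Implicit Defensive.
Import Order.TTheory GRing.Theory Num.Theory.
Local Open Scope ring_scope.

Definition colnum n (x : 'cV[bool]_n) : nat :=
  (\sum_(i < n) (nat_of_bool (x i ord0)) * 2 ^ i)%N.

Definition nu n k (P : 'M[bool]_(n, k)) : seq nat :=
  sort leq [seq colnum (col j P) | j <- enum 'I_k].

Fixpoint lexle (s t : seq nat) : bool :=
  match s, t with
  | [::], _ => true
  | _ :: _, [::] => false
  | x :: s', y :: t' => (x < y)%N || ((x == y) && lexle s' t')
  end.

Definition rowop n k (c : {ffun 'I_n -> bool}) (s : 'S_n) (P : 'M[bool]_(n, k))
  : 'M[bool]_(n, k) :=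
  \matrix_(i, j) addb (c (s i)) (P (s i) j).

Definition minimal_rep n k (P : 'M[bool]_(n, k)) : Prop :=
  (forall j1 j2 : 'I_k, (j1 < j2)%N -> (colnum (col j1 P) < colnum (col j2 P))%N)
  /\ (forall (c : {ffun 'I_n -> bool}) (s : 'S_n), lexle (nu P) (nu (rowop c s P))).

Definition ratv n (x : 'cV[bool]_n) : 'cV[rat]_n :=
  map_mx (fun b : bool => (nat_of_bool b)%:R) x.

(* Vertices f 0, ..., f m form an acute simplex:
   P = [a_1 - a_0, ..., a_m - a_0] has independent columns (affine independence),
   and G = P^T P has G^{-1} with negative off-diagonal entries and positive
   row sums (acuteness of all dihedral angles). *)
Definition acute_vertices n m (f : 'I_m.+1 -> 'cV[bool]_n) : Prop :=
  let D : 'M[rat]_(n, m) :=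
    \matrix_(i, j) (ratv (f (lift ord0 j)) i ord0 - ratv (f ord0) i ord0) in
  let G := D^T *m D in
  \rank D = m /\
  (forall i j : 'I_m, i != j -> invmx G i j < 0) /\
  (forall i : 'I_m, 0 < \sum_(j < m) invmx G i j).

Definition acute_simplex n (S : {set 'cV[bool]_n}) : Prop :=
  exists m (f : 'I_m.+1 -> 'cV[bool]_n),
    injective f /\ S = [set f i | i : 'I_m.+1] /\ acute_vertices f.

Definition cols n k (P : 'M[bool]_(n, k)) : {set 'cV[bool]_n} :=
  [set col j P | j : 'I_k].

Definition in_A n (S : {set 'cV[bool]_n}) (v : 'cV[bool]_n) : Prop :=
  v \notin S /\ acute_simplex (v |: S).

From HB Require Import structures.
From mathcomp Require Import all_boot all_order all_fingroup all_algebra.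

(* The three leftmost columns of M form T, so M = [T | t] for its last column t,
   and the vertex set of M is that of T together with t.  Since the column numbers
   of a minimal representation increase strictly, its columns are pairwise distinct;
   hence t is a new vertex and cols T u {t} spans an acute tetrahedron. *)

Set Implicit Arguments.
Unset Strict Implicit.
Unset Printing Implicit Defensive.

Section Columns.

Variable n : nat.

Lemma col_ord1 (c : 'cV[bool]_n) (j : 'I_1) : col j c = c.
Proof. by apply/matrixP=> i k; rewrite !mxE !ord1. Qed.

Lemma cols_cV (c : 'cV[bool]_n) : cols c = [set c].
Proof.
apply/setP=> x; rewrite in_set1; apply/imsetP/eqP => [[j _ ->]|->].
  exact: col_ord1.
by exists ord0; rewrite ?col_ord1.
Qed.

Lemma cols_row_mx k1 k2 (A : 'M[bool]_(n, k1)) (B : 'M[bool]_(n, k2)) :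
  cols (row_mx A B) = cols A :|: cols B.
Proof.
apply/setP=> x; rewrite inE; apply/imsetP/orP => [[j _ ->]|].
  by rewrite -(splitK j); case: (split j) => j' /=;
    [left; rewrite colKl | right; rewrite colKr]; apply: imset_f.
case=> /imsetP [j _ ->]; [exists (lshift k2 j) | exists (rshift k1 j)] => //.
  by rewrite colKl.
by rewrite colKr.
Qed.

Lemma cols_row_mx_cV k (A : 'M[bool]_(n, k)) (t : 'cV[bool]_n) :
  cols (row_mx A t) = t |: cols A.
Proof. by rewrite cols_row_mx cols_cV setUC. Qed.

Lemma minimal_rep_col_inj k (P : 'M[bool]_(n, k)) :
  minimal_rep P -> injective (fun j : 'I_k => col j P).
Proof.
move=> [incP _] j1 j2 eq_col; apply: val_inj; apply/eqP.
by case: ltngtP => // lt_j; have := incP _ _ lt_j; rewrite eq_col ltnn.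
Qed.

Lemma minimal_rep_row_mx_cV_notin k (A : 'M[bool]_(n, k)) (t : 'cV[bool]_n) :
  minimal_rep (row_mx A t) -> t \notin cols A.
Proof.
move=> /minimal_rep_col_inj inj_col; apply/imsetP => -[j _ tE].
have /inj_col /eqP : col (lshift 1 j) (row_mx A t) = col (rshift k ord0) (row_mx A t).
  by rewrite colKl colKr col_ord1 tE.
by rewrite eq_shift.
Qed.

End Columns.

Theorem proposition5p14 (n : nat) (T : 'M[bool]_(n, 3)) :
  minimal_rep T -> acute_simplex (cols T) ->
  forall M : 'M[bool]_(n, 3 + 1),
    minimal_rep M -> acute_simplex (cols M) -> lsubmx M = T ->
    exists t : 'cV[bool]_n, in_A (cols T) t /\ M = row_mx T t.
Proof.
move=> _ _ M minM acM lsubM.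
have EM : M = row_mx T (rsubmx M) by rewrite -lsubM hsubmxK.
exists (rsubmx M); split=> //; split.
  by apply: minimal_rep_row_mx_cV_notin; rewrite -EM.
by rewrite -cols_row_mx_cV -EM.
Qed.
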